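(* Let $s\in(0,1/2]$. For all $a,\ell\in\mathbb N$ with $2s\ell>1$, \[\sum_{M=1}^{\infty}\prod_{i=0}^{\ell}\frac{1}{(a+iM)^{2s}}\le\frac{1}{a^{2s\ell-1}}\cdot\frac{2s\ell}{2s\ell-1}.\] *)

From mathcomp Require Import all_boot.

From HB Require Import structures.
From mathcomp Require Import all_boot all_order all_algebra.
From mathcomp Require Import all_classical all_reals all_analysis.
From mathcomp Require Import ring lra.
Import Order.TTheory GRing.Theory Num.Theory.
Local Open Scope ring_scope.

(* The i = 0 factor of the M-th product is a^(-2s) <= 1 and each of the other
   l factors is at most (a + M)^(-2s), so the M-th term is at most
   a^(-2s) (a + M)^(-p) with p = 2 s l > 1.  As for the integral of x^(-p),
   the bound (p - 1) (y + 1)^(-p) <= y^(1-p) - (y + 1)^(1-p), a consequence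
   of e^t >= 1 + t, telescopes to sum_M (a + M)^(-p) <= a^(1-p) / (p - 1),
   and p > 1 absorbs the remaining factors. *)

Lemma ler_sum_telescope {R : numDomainType} (u g : nat -> R) {m n : nat} :
  (m <= n)%N -> (forall k, u k <= g k - g k.+1) ->
  \sum_(m <= k < n) u k <= g m - g n.
Proof.
move=> mn u_le; apply: le_trans (ler_sum_nat (fun k _ => u_le k)) _.
rewrite -opprB -telescope_sumr // -sumrN.
by under [X in _ <= X]eq_bigr do rewrite opprB.
Qed.

Section PowRBounds.
Context {R : realType}.

Lemma ln_ge1BV (x : R) : 0 < x -> 1 - x^-1 <= ln x.
Proof.
move=> x0; have gtN1 : -1 < x^-1 - 1 by rewrite ltrBrDr addNr invr_gt0.
have := le_ln1Dx gtN1; rewrite (addrC 1) subrK lnV ?posrE //; lra.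
Qed.

Lemma powR_ge1Dln (x r : R) : 0 < x -> 1 + r * ln x <= x `^ r.
Proof. by move=> x0; rewrite /powR gt_eqF // expR_ge1Dx. Qed.

Lemma invpowR_sub_succ_ge (q y : R) : 0 < q -> 0 < y ->
  q * ((y + 1) `^ (q + 1))^-1 <= (y `^ q)^-1 - ((y + 1) `^ q)^-1.
Proof.
move=> q0 y0; have y10 : 0 < y + 1 by lra.
set V := y `^ q; set W := ((y + 1) / y) `^ q.
have V0 : 0 < V by rewrite powR_gt0.
have W0 : 0 < W by rewrite powR_gt0 // divr_gt0.
have splitU : (y + 1) `^ q = V * W.
  by rewrite -powRM ?ltW ?divr_gt0 // mulrC divfK ?gt_eqF.
have splitU1 : (y + 1) `^ (q + 1) = V * W * (y + 1).
  by rewrite powRD ?(gt_eqF y10) ?implybT // powRr1 ?ltW // splitU.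
have W_ge : 1 + q / (y + 1) <= W.
  apply: le_trans (powR_ge1Dln _ q (divr_gt0 y10 y0)); rewrite lerD2l ler_pM2l //.
  have -> : (y + 1)^-1 = 1 - (y / (y + 1)) by field; rewrite gt_eqF.
  by rewrite -invf_div ln_ge1BV ?divr_gt0.
rewrite splitU splitU1 -subr_ge0.
have -> : V^-1 - (V * W)^-1 - q * (V * W * (y + 1))^-1
          = (W - (1 + q / (y + 1))) / (V * W).
  by field; rewrite !gt_eqF.
by rewrite divr_ge0 ?subr_ge0 // ltW // mulr_gt0.
Qed.

Lemma prod_invpowR_le (r : R) (a M l : nat) : 0 <= r -> (0 < a)%N ->
  \prod_(i < l.+1) ((a + i * M)%:R `^ r)^-1 <=
  (a%:R `^ r)^-1 * ((a + M)%:R `^ (r * l%:R))^-1.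
Proof.
move=> r0 a0; rewrite big_ord_recl /= mul0n addn0.
rewrite ler_wpM2l ?invr_ge0 ?powR_ge0 //.
apply: (@le_trans _ _ (\prod_(i < l) ((a + M)%:R `^ r)^-1)).
  apply: ler_prod => i _; rewrite invr_ge0 powR_ge0 /=.
  rewrite lef_pV2 ?posrE ?powR_gt0 ?ltr0n ?addn_gt0 ?a0 //.
  rewrite ge0_ler_powR ?nnegrE ?ler_nat ?leq_add2l //.
  by rewrite /bump add1n mulSn leq_addr.
by rewrite prodr_const card_ord exprVn powRrM powR_mulrn ?powR_ge0.
Qed.

Lemma sum_invpowR_le (p : R) (a N : nat) : 1 < p -> (0 < a)%N ->
  \sum_(1 <= M < N) ((a + M)%:R `^ p)^-1 <= (a%:R `^ (p - 1))^-1 / (p - 1).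
Proof.
move=> p1 a0; set q := p - 1; have q0 : 0 < q by rewrite subr_gt0.
pose g n := ((a + n)%:R `^ q)^-1 / q.
have step n : ((a + n.+1)%:R `^ p)^-1 <= g n - g n.+1.
  have an0 : 0 < (a + n)%:R :> R by rewrite ltr0n addn_gt0 a0.
  have := @invpowR_sub_succ_ge q _ q0 an0.
  rewrite natr1 -addnS /q subrK => key.
  by rewrite /g -mulrBl ler_pdivlMr // mulrC.
rewrite big_add1 /=.
apply: le_trans (ler_sum_telescope (fun M => ((a + M.+1)%:R `^ p)^-1) g
                   (leq0n N.-1) step) _.
by rewrite /g addn0 gerBl divr_ge0 ?invr_ge0 ?powR_ge0 ?ltW.
Qed.

End PowRBounds.

Lemma nneseries_le_partial_ub (R : realType) (u : nat -> R) (m : nat) (c : R) :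
  (forall k, (m <= k)%N -> 0 <= u k) -> (forall n, \sum_(m <= k < n) u k <= c) ->
  (\sum_(m <= k <oo) (u k)%:E <= c%:E)%E.
Proof.
move=> u_ge0 partial_le; apply: lime_le.
  by apply: is_cvg_nneseries => k mk _; rewrite lee_fin u_ge0.
by apply: nearW => n; rewrite sumEFin lee_fin.
Qed.

Theorem lemma2p2 (R : realType) (s : R) (a l : nat) :
  0 < s -> s <= 1 / 2 -> (0 < a)%N -> 1 < 2 * s * l%:R ->
  (\sum_(1 <= M <oo)
      (\prod_(i < l.+1) ((a + i * M)%:R `^ (2 * s))^-1)%:E <=
   ((a%:R `^ (2 * s * l%:R - 1))^-1 * ((2 * s * l%:R) / (2 * s * l%:R - 1)))%:E)%E.
Proof.
move=> s0 _ a0 p1; set p := 2 * s * l%:R; have s20 : 0 <= 2 * s by lra.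
apply: nneseries_le_partial_ub => [M _|n].
  by apply: prodr_ge0 => i _; rewrite invr_ge0 powR_ge0.
apply: le_trans (ler_sum_nat (fun M _ => prod_invpowR_le (2 * s) a M l s20 a0)) _.
rewrite -mulr_sumr; apply: le_trans (ler_wpM2l _ (sum_invpowR_le p a n p1 a0)) _.
  by rewrite invr_ge0 powR_ge0.
have aV_le1 : (a%:R `^ (2 * s))^-1 <= 1.
  have a_ge1 : 1 <= a%:R :> R by rewrite ler1n.
  rewrite invf_le1 ?powR_gt0 ?ltr0n // -[X in X <= _](powRr0 a%:R).
  exact: ler_powR _ a_ge1 _ _ s20.
rewrite mulrA [X in _ <= X]mulrA ler_wpM2r ?invr_ge0 ?subr_ge0 ?(ltW p1) //.
rewrite mulrC ler_wpM2l ?invr_ge0 ?powR_ge0 //.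
exact: le_trans aV_le1 (ltW p1).
Qed.
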